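(* Let $n \ge 1$ and let $p_0, p_1, \ldots, p_n \in \mathbb{Z}^2$ be integer points with $p_n = p_0$, forming the closed polygon $P = (p_0, p_1, \ldots, p_n)$ (not necessarily simple). Then $$\mathrm{Area}(P) = \sum_{q \in \mathbb{Z}^2} \mathrm{Ang}(P - q).$$
   Context: For $u = (u_1,u_2), v = (v_1,v_2) \in \mathbb{R}^2$ define $\mathrm{area}(u,v) := \tfrac12 (u_1 - v_1)(u_2 + v_2)$, and for a polygon $P = (p_0, \ldots, p_n)$ define $\mathrm{Area}(P) := \sum_{i=1}^n \mathrm{area}(p_{i-1}, p_i)$. The euclidean angle measure $\mathrm{ang} \colon \mathbb{R}^2 \times \mathbb{R}^2 \to (-\tfrac12, \tfrac12)$ is defined as follows: if $|u|\,|v| + u \cdot v > 0$ (so $u, v \ne 0$ and $v \notin u\,\mathbb{R}_{<0}$), let $\theta \in (-\pi, \pi)$ be the unique real number with $\frac{v}{|v|} = \begin{pmatrix} \cos\theta & -\sin\theta \\ \sin\theta & \cos\theta \end{pmatrix} \frac{u}{|u|}$ and set $\mathrm{ang}(u,v) := \theta / (2\pi)$; if $|u|\,|v| + u \cdot v = 0$, set $\mathrm{ang}(u,v) := 0$. For a polygon $P = (p_0, \ldots, p_n)$ define $\mathrm{Ang}(P) := \sum_{i=1}^n \mathrm{ang}(p_{i-1}, p_i)$, and for $q \in \mathbb{R}^2$ let $P - q := (p_0 - q, p_1 - q, \ldots, p_n - q)$. (For a closed polygon only finitely many $q \in \mathbb{Z}^2$ have $\mathrm{Ang}(P-q) \neq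 0$, so the sum is a finite sum.) *)

From Stdlib Require Import Reals List ZArith ClassicalEpsilon.
Open Scope R_scope.

Definition pt := (R * R)%type.

Definition dot (u v : pt) : R := fst u * fst v + snd u * snd v.
Definition norm (u : pt) : R := sqrt (fst u ^ 2 + snd u ^ 2).

Definition area (u v : pt) : R := / 2 * (fst u - fst v) * (snd u + snd v).

Definition rot_angle (u v : pt) (th : R) : Prop :=
  - PI < th < PI /\
  fst v / norm v = cos th * (fst u / norm u) - sin th * (snd u / norm u) /\
  snd v / norm v = sin th * (fst u / norm u) + cos th * (snd u / norm u).

(* the (unique, when |u||v| + u.v > 0) such theta, chosen by Hilbert epsilon *)
Definition theta (u v : pt) : R := epsilon (inhabits 0) (rot_angle u v).

Definition ang (u v : pt) : R :=
  if Rlt_dec 0 (norm u * norm v + dot u v)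
  then theta u v / (2 * PI)
  else 0.

Definition ipt := (Z * Z)%type.
Definition toR (p : ipt) : pt := (IZR (fst p), IZR (snd p)).
Definition subq (p q : ipt) : pt := (IZR (fst p) - IZR (fst q), IZR (snd p) - IZR (snd q)).

Definition sumR (l : list R) : R := fold_right Rplus 0 l.

(* polygon P = (p 0, ..., p n) given by p : nat -> ipt *)
Definition Area (p : nat -> ipt) (n : nat) : R :=
  sumR (map (fun i => area (toR (p (i - 1)%nat)) (toR (p i))) (seq 1 n)).

Definition Ang_shift (p : nat -> ipt) (n : nat) (q : ipt) : R :=
  sumR (map (fun i => ang (subq (p (i - 1)%nat) q) (subq (p i) q)) (seq 1 n)).

From Stdlib Require Import Reals List ZArith.
From Stdlib Require Import Lia Lra Permutation Classical ClassicalEpsilon.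
Open Scope R_scope.

(* Triangulate P as a fan from p_0.  Area is additive under this decomposition, and so is
   Ang(P - q) because ang is antisymmetric; this reduces the theorem to a lattice triangle T
   of doubled signed area D, for which the sum over q of Ang(T - q) is D/2.  If q lies outside
   the closed triangle, the three vertices lie in an open half-plane seen from q and
   Ang(T - q) = 0; at the vertices of a positively oriented triangle the contributions are its
   interior angles divided by 2 pi, which sum to 1/2.  A triangle with D = 1 has no other
   lattice points, and one with D >= 2 contains a lattice point other than its vertices (its
   edge vectors span a sublattice of index D), at which it splits into three triangles of
   smaller area. *)

(** * Angles between plane vectors *)

Definition vsub (u v : pt) : pt := (fst u - fst v, snd u - snd v).
Definition vneg (u : pt) : pt := (- fst u, - snd u).
Definition cross (u v : pt) : R := fst u * snd v - snd u * fst v.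

Lemma norm_sqr u : norm u * norm u = fst u ^ 2 + snd u ^ 2.
Proof. unfold norm. apply sqrt_sqrt. nra. Qed.

Lemma norm_ge0 u : 0 <= norm u.
Proof. apply sqrt_pos. Qed.

Lemma norm_pos u : ~ (fst u = 0 /\ snd u = 0) -> 0 < norm u.
Proof.
  intros hu. apply sqrt_lt_R0.
  destruct (Req_dec (fst u) 0), (Req_dec (snd u) 0); [tauto | nra ..].
Qed.

Lemma norm_vneg u : norm (vneg u) = norm u.
Proof. unfold norm, vneg; simpl. f_equal. ring. Qed.

Lemma vneg_vsub u v : vneg (vsub u v) = vsub v u.
Proof. unfold vneg, vsub; simpl. f_equal; ring. Qed.

Lemma dot_pos_norm u v : 0 < dot u v -> 0 < norm u /\ 0 < norm v.
Proof.
  unfold dot. intros h. split; apply norm_pos; intros [h1 h2]; rewrite h1, h2 in h; lra.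
Qed.

Lemma cross_pos_norm u v : 0 < cross u v -> 0 < norm u /\ 0 < norm v.
Proof.
  unfold cross. intros h. split; apply norm_pos; intros [h1 h2]; rewrite h1, h2 in h; lra.
Qed.

Lemma lagrange_identity u v :
  dot u v ^ 2 + cross u v ^ 2 = (norm u * norm u) * (norm v * norm v).
Proof. rewrite !norm_sqr. unfold dot, cross. ring. Qed.

Lemma cos_gt_m1 a : - PI < a < PI -> -1 < cos a.
Proof.
  intros ha. replace a with (2 * (a / 2)) by field.
  rewrite cos_2a_cos. assert (0 < cos (a / 2)) by (apply cos_gt_0; lra). nra.
Qed.

Lemma cos_eq_1_0 a : - (2 * PI) < a < 2 * PI -> cos a = 1 -> a = 0.
Proof.
  intros ha h. replace a with (2 * (a / 2)) in h by field.
  rewrite cos_2a_sin in h. assert (hs : sin (a / 2) = 0) by nra.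
  destruct (Rtotal_order a 0) as [l | [e | g]]; [| exact e |].
  - pose proof (sin_lt_0_var (a / 2)). lra.
  - pose proof (sin_gt_0 (a / 2)). lra.
Qed.

Lemma cos_sin_inj a b : - PI < a < PI -> - PI < b < PI ->
  cos a = cos b -> sin a = sin b -> a = b.
Proof.
  intros ha hb hc hs.
  assert (h1 : cos (a - b) = 1).
  { rewrite cos_minus, hc, hs. pose proof (sin2_cos2 b). unfold Rsqr in *. lra. }
  apply cos_eq_1_0 in h1; lra.
Qed.

Lemma cos_pos_range a : - PI < a <= PI -> 0 < cos a -> - (PI / 2) < a < PI / 2.
Proof.
  intros ha hc. split.
  - destruct (Rlt_dec (- (PI / 2)) a) as [l | l]; [exact l |].
    pose proof (cos_le_0 (- a)) as h. rewrite cos_neg in h. lra.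
  - destruct (Rlt_dec a (PI / 2)) as [l | l]; [exact l |].
    pose proof (cos_le_0 a). lra.
Qed.

Lemma sin_pos_range a : - PI < a <= PI -> 0 < sin a -> 0 < a < PI.
Proof.
  intros ha hs. split.
  - destruct (Rtotal_order a 0) as [l | [e | g]]; [| subst a; rewrite sin_0 in hs; lra | exact g].
    pose proof (sin_lt_0_var a). lra.
  - destruct (Rtotal_order a PI) as [l | [e | g]]; [exact l | | lra].
    subst a. rewrite sin_PI in hs. lra.
Qed.

Lemma sin_eq_0_range a : - PI < a < PI -> sin a = 0 -> a = 0.
Proof.
  intros ha hs. destruct (Rtotal_order a 0) as [l | [e | g]]; [| exact e |].
  - pose proof (sin_lt_0_var a). lra.
  - pose proof (sin_gt_0 a). lra.
Qed.

Lemma rotation_coords e1 e2 f1 f2 c s : e1 ^ 2 + e2 ^ 2 = 1 ->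
  (f1 = c * e1 - s * e2 /\ f2 = s * e1 + c * e2 <->
   c = e1 * f1 + e2 * f2 /\ s = e1 * f2 - e2 * f1).
Proof.
  intros he. split; intros [h1 h2]; subst.
  - split; [rewrite <- (Rmult_1_r c) at 1 | rewrite <- (Rmult_1_r s) at 1];
      rewrite <- he; ring.
  - split; [rewrite <- (Rmult_1_r f1) at 1 | rewrite <- (Rmult_1_r f2) at 1];
      rewrite <- he; ring.
Qed.

Definition is_angle (u v : pt) (a : R) : Prop :=
  0 < norm u /\ 0 < norm v /\
  cos a * (norm u * norm v) = dot u v /\ sin a * (norm u * norm v) = cross u v.

Lemma rot_angle_iff u v t : 0 < norm u -> 0 < norm v ->
  rot_angle u v t <-> - PI < t < PI /\ is_angle u v t.
Proof.
  intros hu hv. unfold rot_angle, is_angle.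
  rewrite rotation_coords.
  2:{ rewrite <- (Rdiv_diag (norm u * norm u)), norm_sqr at 1 by nra. field. lra. }
  assert (scale : forall x y, x = y / (norm u * norm v) <-> x * (norm u * norm v) = y).
  { intros x y. split; [intros -> | intros <-]; field; lra. }
  replace (fst u / norm u * (fst v / norm v) + snd u / norm u * (snd v / norm v))
    with (dot u v / (norm u * norm v)) by (unfold dot; field; lra).
  replace (fst u / norm u * (snd v / norm v) - snd u / norm u * (fst v / norm v))
    with (cross u v / (norm u * norm v)) by (unfold cross; field; lra).
  rewrite !scale. tauto.
Qed.

Lemma is_angle_exists u v : 0 < norm u -> 0 < norm v ->
  exists a, - PI < a <= PI /\ is_angle u v a.
Proof.
  intros hu hv.
  set (N := norm u * norm v).
  assert (hN : 0 < N) by (unfold N; nra).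
  set (c := dot u v / N). set (s := cross u v / N).
  assert (hcs : c ^ 2 + s ^ 2 = 1).
  { unfold c, s.
    replace ((dot u v / N) ^ 2 + (cross u v / N) ^ 2)
      with ((dot u v ^ 2 + cross u v ^ 2) / (N * N)) by (field; lra).
    rewrite lagrange_identity. unfold N. field. lra. }
  assert (ec : dot u v = c * N) by (unfold c; field; lra).
  assert (es : cross u v = s * N) by (unfold s; field; lra).
  clearbody c s.
  assert (hc : -1 <= c <= 1) by nra.
  assert (hsq : sqrt (1 - c²) = Rabs s).
  { rewrite <- sqrt_Rsqr_abs. f_equal. unfold Rsqr. simpl in hcs. lra. }
  pose proof PI_RGT_0.
  destruct (Rle_dec 0 s) as [s0 | s0].
  - exists (acos c). pose proof (acos_bound c).
    split; [lra |]. do 2 (split; [assumption |]). fold N.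
    rewrite cos_acos, sin_acos, hsq, Rabs_right by lra. lra.
  - exists (- acos c).
    assert (hc' : -1 < c < 1) by nra.
    pose proof (acos_bound_lt c hc').
    split; [lra |]. do 2 (split; [assumption |]). fold N.
    rewrite cos_neg, sin_neg, cos_acos, sin_acos, hsq, Rabs_left by lra. lra.
Qed.

Lemma is_angle_unique u v a b : is_angle u v a -> is_angle u v b ->
  - PI < a < PI -> - PI < b < PI -> a = b.
Proof.
  intros (hu & hv & hca & hsa) (_ & _ & hcb & hsb) ha hb.
  assert (hN : norm u * norm v <> 0) by (apply Rgt_not_eq; nra).
  apply cos_sin_inj; [assumption | assumption | |];
    apply (Rmult_eq_reg_r (norm u * norm v)); congruence.
Qed.

Lemma is_angle_cos_pos u v a : is_angle u v a -> 0 < dot u v -> 0 < cos a.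
Proof. intros (hu & hv & hc & _) h. apply (Rmult_lt_reg_r (norm u * norm v)); nra. Qed.

Lemma is_angle_sin_pos u v a : is_angle u v a -> 0 < cross u v -> 0 < sin a.
Proof. intros (hu & hv & _ & hs) h. apply (Rmult_lt_reg_r (norm u * norm v)); nra. Qed.

Lemma is_angle_sym u v a : is_angle u v a -> is_angle v u (- a).
Proof.
  intros (hu & hv & hc & hs). do 2 (split; [assumption |]).
  rewrite cos_neg, sin_neg. unfold dot, cross in *. split; nra.
Qed.

Lemma is_angle_add u v w a b : is_angle u v a -> is_angle v w b -> is_angle u w (a + b).
Proof.
  intros (hu & hv & hc & hs) (_ & hw & hc' & hs'). do 2 (split; [assumption |]).
  pose proof (norm_sqr v) as hn.
  rewrite cos_plus, sin_plus. split; apply (Rmult_eq_reg_r (norm v * norm v)); try nra.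
  - transitivity ((cos a * (norm u * norm v)) * (cos b * (norm v * norm w))
                  - (sin a * (norm u * norm v)) * (sin b * (norm v * norm w))); [ring |].
    rewrite hc, hs, hc', hs', hn. unfold dot, cross. ring.
  - transitivity ((sin a * (norm u * norm v)) * (cos b * (norm v * norm w))
                  + (cos a * (norm u * norm v)) * (sin b * (norm v * norm w))); [ring |].
    rewrite hc, hs, hc', hs', hn. unfold dot, cross. ring.
Qed.

Lemma is_angle_vneg u v a : is_angle u v a -> is_angle (vneg u) (vneg v) a.
Proof.
  intros (hu & hv & hc & hs). unfold is_angle. rewrite !norm_vneg.
  unfold dot, cross, vneg in *; simpl. lra.
Qed.

Lemma ang_is_angle u v a : is_angle u v a -> - PI < a < PI -> ang u v = a / (2 * PI).
Proof.
  intros ha hpi. pose proof ha as (hu & hv & hc & _).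
  unfold ang. destruct (Rlt_dec _ _) as [hpos | hneg].
  - unfold theta.
    assert (hrot : rot_angle u v a) by (apply rot_angle_iff; auto).
    pose proof (epsilon_spec (inhabits 0) (rot_angle u v) (ex_intro _ a hrot)) as ht.
    apply rot_angle_iff in ht as [ht hta]; [| assumption ..].
    f_equal. apply (is_angle_unique u v); assumption.
  - exfalso. apply hneg. rewrite <- hc. pose proof (cos_gt_m1 a hpi).
    assert (0 < norm u * norm v) by nra. nra.
Qed.

Lemma ang_spec u v : 0 < norm u * norm v + dot u v ->
  exists a, - PI < a < PI /\ is_angle u v a.
Proof.
  intros h.
  assert (hu : 0 < norm u).
  { destruct (Req_dec (norm u) 0) as [e | n]; [| pose proof (norm_ge0 u); lra].
    rewrite e, Rmult_0_l, Rplus_0_l in h. apply (dot_pos_norm u v h). }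
  assert (hv : 0 < norm v).
  { destruct (Req_dec (norm v) 0) as [e | n]; [| pose proof (norm_ge0 v); lra].
    rewrite e, Rmult_0_r, Rplus_0_l in h. apply (dot_pos_norm u v h). }
  destruct (is_angle_exists u v hu hv) as [a [ha hr]].
  exists a. split; [| exact hr].
  destruct (Req_dec a PI) as [e | n]; [| lra].
  destruct hr as (_ & _ & hc & _). rewrite e, cos_PI in hc. lra.
Qed.

Lemma ang_eq0 u v : norm u * norm v + dot u v <= 0 -> ang u v = 0.
Proof. intros h. unfold ang. destruct (Rlt_dec _ _); [lra | reflexivity]. Qed.

Lemma ang_antisym u v : ang v u = - ang u v.
Proof.
  destruct (Rlt_dec 0 (norm u * norm v + dot u v)) as [h | h].
  - destruct (ang_spec u v h) as [a [ha hr]].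
    rewrite (ang_is_angle u v a), (ang_is_angle v u (- a)) by (auto using is_angle_sym; lra).
    field. pose proof PI_RGT_0. lra.
  - rewrite !ang_eq0; [lra | ..]; unfold dot in *; lra.
Qed.

Lemma ang_cross0 u v : cross u v = 0 -> ang u v = 0.
Proof.
  intros h.
  destruct (Rlt_dec 0 (norm u * norm v + dot u v)) as [c | c]; [| apply ang_eq0; lra].
  destruct (ang_spec u v c) as [a [ha hr]].
  rewrite (ang_is_angle u v a hr ha).
  assert (hs : sin a = 0).
  { destruct hr as (hu & hv & _ & hs). rewrite h in hs.
    apply Rmult_integral in hs as [hs | hs]; [exact hs | nra]. }
  rewrite (sin_eq_0_range a ha hs). lra.
Qed.

Lemma ang_cycle_halfplane d u v w : 0 < dot d u -> 0 < dot d v -> 0 < dot d w ->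
  ang u v + ang v w + ang w u = 0.
Proof.
  intros hu hv hw.
  assert (polar : forall x, 0 < dot d x ->
            exists t, - (PI / 2) < t < PI / 2 /\ is_angle d x t).
  { intros x hx. destruct (dot_pos_norm d x hx) as [hd' hx'].
    destruct (is_angle_exists d x hd' hx') as [t [ht hr]].
    exists t. split; [| exact hr].
    apply cos_pos_range; [exact ht | exact (is_angle_cos_pos d x t hr hx)]. }
  assert (diff : forall x y s t, - (PI / 2) < s < PI / 2 -> is_angle d x s ->
            - (PI / 2) < t < PI / 2 -> is_angle d y t -> ang x y = (t - s) / (2 * PI)).
  { intros x y s t hs hx ht hy. replace (t - s) with (- s + t) by ring.
    apply ang_is_angle; [| lra]. eapply is_angle_add; [apply is_angle_sym |]; eassumption. }
  destruct (polar u hu) as [a [ha ra]].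
  destruct (polar v hv) as [b [hb rb]].
  destruct (polar w hw) as [c [hc rc]].
  rewrite (diff u v a b), (diff v w b c), (diff w u c a) by assumption.
  field. pose proof PI_RGT_0. lra.
Qed.

Lemma triangle_angle_sum A B C : 0 < cross (vsub B A) (vsub C A) ->
  ang (vsub B A) (vsub C A) + ang (vsub C B) (vsub A B) + ang (vsub A C) (vsub B C) = / 2.
Proof.
  intros h.
  assert (interior : forall u v, 0 < cross u v ->
            exists a, 0 < a < PI /\ is_angle u v a /\ ang u v = a / (2 * PI)).
  { intros u v huv. destruct (cross_pos_norm u v huv) as [hu hv].
    destruct (is_angle_exists u v hu hv) as [a [ha hr]].
    pose proof (sin_pos_range a ha (is_angle_sin_pos u v a hr huv)).
    exists a. split; [assumption |]. split; [assumption |].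
    apply ang_is_angle; [assumption | lra]. }
  assert (hb : 0 < cross (vsub C B) (vsub A B)) by (unfold cross, vsub in *; simpl in *; nra).
  assert (hc : 0 < cross (vsub A C) (vsub B C)) by (unfold cross, vsub in *; simpl in *; nra).
  destruct (interior _ _ h) as [a [ha [ra ->]]].
  destruct (interior _ _ hb) as [b [hb' [rb ->]]].
  destruct (interior _ _ hc) as [c [hc' [rc ->]]].
  (* turning by a, then c, then b carries B - A to A - B = -(B - A) *)
  apply is_angle_vneg in rc. rewrite !vneg_vsub in rc.
  destruct (is_angle_add _ _ _ _ _ (is_angle_add _ _ _ _ _ ra rc) rb) as (hu & _ & hcos & _).
  rewrite <- (vneg_vsub B A), norm_vneg in hcos.
  assert (hpi : cos (a + c + b - PI) = 1).
  { assert (cos (a + c + b) = -1).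
    { apply (Rmult_eq_reg_r (norm (vsub B A) * norm (vsub B A))); [| apply Rgt_not_eq; nra].
      rewrite hcos, norm_sqr. unfold dot, vneg. simpl. ring. }
    rewrite cos_minus, cos_PI, sin_PI. lra. }
  apply cos_eq_1_0 in hpi; [| pose proof PI_RGT_0; lra].
  replace (a / (2 * PI) + b / (2 * PI) + c / (2 * PI)) with ((a + c + b) / (2 * PI))
    by (field; pose proof PI_RGT_0; lra).
  replace (a + c + b) with PI by lra. field. pose proof PI_RGT_0; lra.
Qed.

(** * Lattice triangles *)

Definition zcross (u v : ipt) : Z := (fst u * snd v - snd u * fst v)%Z.
Definition zsub (u v : ipt) : ipt := (fst u - fst v, snd u - snd v)%Z.

Definition dbl_area (a b c : ipt) : Z := zcross (zsub b a) (zsub c a).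

Definition in_triangle (a b c q : ipt) : Prop :=
  (0 <= dbl_area q a b /\ 0 <= dbl_area q b c /\ 0 <= dbl_area q c a)%Z.

Definition Ang_tri (a b c q : ipt) : R :=
  ang (subq a q) (subq b q) + ang (subq b q) (subq c q) + ang (subq c q) (subq a q).

Lemma ipt_eq_dec (x y : ipt) : {x = y} + {x <> y}.
Proof. decide equality; apply Z.eq_dec. Qed.

Section LatticeTriangles.
Local Open Scope Z_scope.

(* By Cramer's rule [D x = (x × v) u + (u × x) v] where [D = u × v], so the two divisibility
   conditions say that x lies in the lattice spanned by u and v. *)
Lemma sublattice_proper u v : 2 <= zcross u v ->
  exists x, ~ ((zcross u v | zcross x v) /\ (zcross u v | zcross u x)).
Proof.
  intros hD. apply NNPP. intros hall.
  assert (hdiv : forall x, (zcross u v | zcross x v) /\ (zcross u v | zcross u x)).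
  { intros x. apply NNPP. intros hx. apply hall. exists x. exact hx. }
  (* if both unit vectors lie in the lattice spanned by u and v, then D^2 divides D *)
  destruct (hdiv (1, 0)) as [[k1 h1] [k2 h2]], (hdiv (0, 1)) as [[k3 h3] [k4 h4]].
  set (D := zcross u v) in *.
  assert (eD : D = fst u * snd v - snd u * fst v) by reflexivity.
  unfold zcross in h1, h2, h3, h4; cbn [fst snd] in h1, h2, h3, h4.
  assert (hDD : (D * D | D)).
  { exists (k1 * k4 - k2 * k3). rewrite eD at 1.
    replace (snd v) with (k1 * D) by lia. replace (snd u) with (- (k2 * D)) by lia.
    replace (fst v) with (- (k3 * D)) by lia. replace (fst u) with (k4 * D) by lia. ring. }
  apply Z.divide_pos_le in hDD; nia.
Qed.

Lemma sublattice_reduce u v x : 0 < zcross u v ->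
  ~ ((zcross u v | zcross x v) /\ (zcross u v | zcross u x)) ->
  exists y, 0 <= zcross y v < zcross u v /\ 0 <= zcross u y < zcross u v /\
            (zcross y v <> 0 \/ zcross u y <> 0).
Proof.
  intros hD hx. set (D := zcross u v) in *.
  set (k := zcross x v / D). set (l := zcross u x / D).
  exists (fst x - k * fst u - l * fst v, snd x - k * snd u - l * snd v).
  replace (zcross _ v) with (zcross x v mod D).
  2:{ rewrite Z.mod_eq by lia. unfold k, D, zcross; cbn [fst snd]. ring. }
  replace (zcross u _) with (zcross u x mod D).
  2:{ rewrite Z.mod_eq by lia. unfold l, D, zcross; cbn [fst snd]. ring. }
  rewrite <- !(Z.mod_divide _ D) in hx by lia.
  pose proof (Z.mod_pos_bound (zcross x v) D hD).
  pose proof (Z.mod_pos_bound (zcross u x) D hD).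
  lia.
Qed.

Lemma dbl_area_cycle a b c : dbl_area b c a = dbl_area a b c.
Proof. unfold dbl_area, zcross, zsub; cbn [fst snd]. ring. Qed.

Lemma dbl_area_swap a b c : dbl_area a c b = - dbl_area a b c.
Proof. unfold dbl_area, zcross, zsub; cbn [fst snd]. ring. Qed.

Lemma dbl_area_split q a b c :
  dbl_area q a b + dbl_area q b c + dbl_area q c a = dbl_area a b c.
Proof. unfold dbl_area, zcross, zsub; cbn [fst snd]. ring. Qed.

Lemma dbl_area_barycentric a b c q :
  dbl_area a b c * fst q =
    dbl_area q b c * fst a + dbl_area q c a * fst b + dbl_area q a b * fst c /\
  dbl_area a b c * snd q =
    dbl_area q b c * snd a + dbl_area q c a * snd b + dbl_area q a b * snd c.
Proof. unfold dbl_area, zcross, zsub; cbn [fst snd]. split; ring. Qed.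

Lemma exists_split_point a b c : 2 <= dbl_area a b c ->
  exists e, in_triangle a b c e /\
    dbl_area e a b < dbl_area a b c /\ dbl_area e b c < dbl_area a b c /\
    dbl_area e c a < dbl_area a b c.
Proof.
  intros hD. unfold in_triangle.
  set (u := zsub b a). set (v := zsub c a).
  change (dbl_area a b c) with (zcross u v) in *.
  destruct (sublattice_proper u v hD) as [x hx].
  destruct (sublattice_reduce u v x ltac:(lia) hx) as [y (hal & hbe & hnz)].
  set (al := zcross y v) in *. set (be := zcross u y) in *.
  destruct (Z_le_gt_dec (al + be) (zcross u v)).
  - set (e := (fst a + fst y, snd a + snd y)). exists e.
    assert (dbl_area e a b = be /\ dbl_area e b c = zcross u v - al - be /\ dbl_area e c a = al)
      by (unfold e, al, be, u, v, dbl_area, zcross, zsub; cbn [fst snd]; repeat split; ring).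
    lia.
  - (* otherwise reflect y through the centre of the parallelogram spanned by u and v *)
    set (e := (fst b + fst c - fst a - fst y, snd b + snd c - snd a - snd y)). exists e.
    assert (dbl_area e a b = zcross u v - be /\ dbl_area e b c = al + be - zcross u v /\
            dbl_area e c a = zcross u v - al)
      by (unfold e, al, be, u, v, dbl_area, zcross, zsub; cbn [fst snd]; repeat split; ring).
    lia.
Qed.

End LatticeTriangles.

Lemma cross_subq a b q : cross (subq a q) (subq b q) = IZR (dbl_area q a b).
Proof.
  unfold cross, subq, dbl_area, zcross, zsub; cbn [fst snd].
  rewrite minus_IZR, !mult_IZR, !minus_IZR. ring.
Qed.

Lemma dbl_area_shoelace a b c :
  IZR (dbl_area a b c) / 2 = area (toR a) (toR b) + area (toR b) (toR c) + area (toR c) (toR a).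
Proof.
  unfold dbl_area, zcross, zsub, area, toR; cbn [fst snd].
  rewrite minus_IZR, !mult_IZR, !minus_IZR. field.
Qed.

Lemma Ang_tri_cycle a b c q : Ang_tri b c a q = Ang_tri a b c q.
Proof. unfold Ang_tri. ring. Qed.

Lemma Ang_tri_swap a b c q : Ang_tri a c b q = - Ang_tri a b c q.
Proof.
  unfold Ang_tri.
  rewrite (ang_antisym (subq a q)), (ang_antisym (subq c q)), (ang_antisym (subq b q)). ring.
Qed.

Lemma Ang_tri_split e a b c q :
  Ang_tri a b c q = Ang_tri e a b q + Ang_tri e b c q + Ang_tri e c a q.
Proof.
  unfold Ang_tri.
  rewrite (ang_antisym (subq e q) (subq a q)), (ang_antisym (subq e q) (subq b q)),
    (ang_antisym (subq e q) (subq c q)). ring.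
Qed.

Lemma Ang_tri_halfplane a b c q (d1 d2 : Z) :
  (0 < d1 * (fst a - fst q) + d2 * (snd a - snd q))%Z ->
  (0 < d1 * (fst b - fst q) + d2 * (snd b - snd q))%Z ->
  (0 < d1 * (fst c - fst q) + d2 * (snd c - snd q))%Z ->
  Ang_tri a b c q = 0.
Proof.
  intros ha hb hc. apply (ang_cycle_halfplane (IZR d1, IZR d2));
    unfold dot, subq; cbn [fst snd]; rewrite <- !minus_IZR, <- !mult_IZR, <- plus_IZR;
    apply IZR_lt; assumption.
Qed.

Lemma Ang_tri_outside_edge a b c q : (0 <= dbl_area a b c)%Z -> (dbl_area q a b < 0)%Z ->
  Ang_tri a b c q = 0.
Proof.
  intros hD hq. apply (Ang_tri_halfplane a b c q (snd a - snd b) (fst b - fst a));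
    revert hD hq; unfold dbl_area, zcross, zsub; cbn [fst snd]; lia.
Qed.

Lemma Ang_tri_off_triangle a b c q : (0 <= dbl_area a b c)%Z -> ~ in_triangle a b c q ->
  Ang_tri a b c q = 0.
Proof.
  intros hD hq. unfold in_triangle in hq.
  destruct (Z_lt_le_dec (dbl_area q a b) 0) as [h1 | h1].
  { apply Ang_tri_outside_edge; assumption. }
  destruct (Z_lt_le_dec (dbl_area q b c) 0) as [h2 | h2].
  { rewrite <- (Ang_tri_cycle a b c).
    apply Ang_tri_outside_edge; [rewrite dbl_area_cycle; exact hD | exact h2]. }
  destruct (Z_lt_le_dec (dbl_area q c a) 0) as [h3 | h3].
  { rewrite (Ang_tri_cycle c a b).
    apply Ang_tri_outside_edge; [rewrite <- dbl_area_cycle; exact hD | exact h3]. }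
  tauto.
Qed.

Lemma Ang_tri_degenerate a b c q : dbl_area a b c = 0%Z -> Ang_tri a b c q = 0.
Proof.
  intros hD. destruct (classic (in_triangle a b c q)) as [[h1 [h2 h3]] | hq].
  - pose proof (dbl_area_split q a b c) as hs.
    unfold Ang_tri. rewrite !ang_cross0; [ring | ..]; rewrite cross_subq; f_equal; lia.
  - apply Ang_tri_off_triangle; [lia | assumption].
Qed.

Lemma unimodular_in_triangle a b c q : dbl_area a b c = 1%Z -> in_triangle a b c q ->
  q = a \/ q = b \/ q = c.
Proof.
  intros hD (h1 & h2 & h3).
  pose proof (dbl_area_split q a b c) as hs.
  destruct (dbl_area_barycentric a b c q) as [e1 e2].
  rewrite hD in hs, e1, e2.
  set (k1 := dbl_area q a b) in *. set (k2 := dbl_area q b c) in *.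
  set (k3 := dbl_area q c a) in *. clearbody k1 k2 k3.
  assert (hk : (k2 = 1 /\ k3 = 0 /\ k1 = 0 \/ k2 = 0 /\ k3 = 1 /\ k1 = 0 \/
                k2 = 0 /\ k3 = 0 /\ k1 = 1)%Z) by lia.
  destruct hk as [(-> & -> & ->) | [(-> & -> & ->) | (-> & -> & ->)]];
    [left | right; left | right; right]; apply injective_projections; lia.
Qed.

Lemma Ang_tri_vertices a b c : (0 < dbl_area a b c)%Z ->
  Ang_tri a b c a + Ang_tri a b c b + Ang_tri a b c c = / 2.
Proof.
  intros hD. unfold Ang_tri.
  assert (hzero : forall x y, ang (subq x x) y = 0 /\ ang y (subq x x) = 0).
  { intros x y. split; apply ang_cross0; unfold cross, subq; cbn [fst snd]; ring. }
  rewrite !(proj1 (hzero _ _)), !(proj2 (hzero _ _)).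
  rewrite <- (triangle_angle_sum (toR a) (toR b) (toR c)).
  - unfold vsub, subq, toR; cbn [fst snd]. ring.
  - change (0 < cross (subq b a) (subq c a)). rewrite cross_subq.
    apply IZR_lt. exact hD.
Qed.

(** * Finite sums *)

Lemma sumR_app l1 l2 : sumR (l1 ++ l2) = sumR l1 + sumR l2.
Proof. induction l1 as [| x l IH]; simpl; [ring |]. unfold sumR in *; simpl. rewrite IH. ring. Qed.

Lemma sumR_map_plus {A} (f g : A -> R) l :
  sumR (map (fun x => f x + g x) l) = sumR (map f l) + sumR (map g l).
Proof. induction l as [| x l IH]; unfold sumR in *; simpl; [ring |]. rewrite IH. ring. Qed.

Lemma sumR_map_opp {A} (f : A -> R) l : sumR (map (fun x => - f x) l) = - sumR (map f l).
Proof. induction l as [| x l IH]; unfold sumR in *; simpl; [ring |]. rewrite IH. ring. Qed.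

Lemma sumR_map_ext {A} (f g : A -> R) l :
  (forall x, In x l -> f x = g x) -> sumR (map f l) = sumR (map g l).
Proof. intros h. f_equal. apply map_ext_in. exact h. Qed.

Lemma sumR_map_zero {A} (f : A -> R) l : (forall x, In x l -> f x = 0) -> sumR (map f l) = 0.
Proof.
  induction l as [| x l IH]; intros h; [reflexivity |].
  unfold sumR in *; simpl. rewrite h by (left; reflexivity).
  rewrite IH by (intros y hy; apply h; right; exact hy). ring.
Qed.

Lemma sumR_perm l l' : Permutation l l' -> sumR l = sumR l'.
Proof. induction 1; unfold sumR in *; simpl; congruence || ring. Qed.

Lemma sumR_filter {A} (f : A -> R) (P : A -> bool) l :
  (forall x, In x l -> P x = false -> f x = 0) ->
  sumR (map f l) = sumR (map f (filter P l)).
Proof.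
  induction l as [| x l IH]; intros h; simpl; [reflexivity |].
  destruct (P x) eqn:E; unfold sumR in *; simpl.
  - rewrite IH; [reflexivity |]. intros y hy. apply h. right. exact hy.
  - rewrite h by (simpl; auto).
    rewrite IH by (intros y hy; apply h; right; exact hy). ring.
Qed.

Lemma sumR_map_support {A} (eq_dec : forall x y : A, {x = y} + {x <> y}) (f : A -> R) l s :
  NoDup l -> NoDup s -> incl s l -> (forall x, In x l -> ~ In x s -> f x = 0) ->
  sumR (map f l) = sumR (map f s).
Proof.
  intros hl hs hsl hf.
  set (P := fun x => if in_dec eq_dec x s then true else false).
  rewrite (sumR_filter f P).
  2:{ intros x hx. unfold P. destruct (in_dec eq_dec x s); [discriminate | auto]. }
  apply sumR_perm, Permutation_map, NoDup_Permutation;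
    [apply NoDup_filter; exact hl | exact hs |].
  intros x. rewrite filter_In. unfold P.
  destruct (in_dec eq_dec x s) as [hx | hx]; split.
  - intros _. exact hx.
  - intros _. split; [apply hsl; exact hx | reflexivity].
  - intros [_ e]. discriminate e.
  - intros h. contradiction.
Qed.

Lemma sumR_swap {A B} (f : A -> B -> R) l1 l2 :
  sumR (map (fun x => sumR (map (f x) l2)) l1) =
  sumR (map (fun y => sumR (map (fun x => f x y) l1)) l2).
Proof.
  induction l1 as [| x l IH]; simpl.
  - symmetry. apply sumR_map_zero. reflexivity.
  - unfold sumR at 1; simpl. fold (sumR (map (fun x => sumR (map (f x) l2)) l)).
    rewrite IH, <- sumR_map_plus. reflexivity.
Qed.

Lemma sumR_telescope (h : nat -> R) n :
  sumR (map (fun i => h (i - 1)%nat - h i) (seq 1 n)) = h 0%nat - h n.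
Proof.
  induction n as [| n IH]; [unfold sumR; simpl; ring |].
  rewrite seq_S, map_app, sumR_app, IH. unfold sumR; simpl.
  replace (n - 0)%nat with n by lia. ring.
Qed.

(** * Lattice points in a box *)

Definition inbox (M : Z) (q : ipt) : Prop := (Z.abs (fst q) <= M /\ Z.abs (snd q) <= M)%Z.

Definition zrange (M : Z) : list Z :=
  map (fun k => Z.of_nat k - M)%Z (seq 0 (Z.to_nat (2 * M + 1))).

Definition box (M : Z) : list ipt := list_prod (zrange M) (zrange M).

Lemma In_zrange M z : In z (zrange M) <-> (Z.abs z <= M)%Z.
Proof.
  unfold zrange. rewrite in_map_iff. split.
  - intros [k [<- hk]]. apply in_seq in hk. lia.
  - intros hz. exists (Z.to_nat (z + M)). rewrite in_seq. lia.
Qed.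

Lemma In_box M q : In q (box M) <-> inbox M q.
Proof.
  destruct q as [x y]. unfold box, inbox, ipt. rewrite in_prod_iff, !In_zrange. reflexivity.
Qed.

Lemma NoDup_list_prod {A B} (l1 : list A) (l2 : list B) :
  NoDup l1 -> NoDup l2 -> NoDup (list_prod l1 l2).
Proof.
  induction 1 as [| x l nx nd IH]; intros h2; simpl; [constructor |].
  apply NoDup_app; [| apply IH, h2 |].
  - apply FinFun.Injective_map_NoDup; [intros y1 y2 e; injection e; auto | exact h2].
  - intros [u v] hin hin'. apply in_map_iff in hin as [y [e _]]. injection e as -> ->.
    apply in_prod_iff in hin'. tauto.
Qed.

Lemma NoDup_box M : NoDup (box M).
Proof.
  assert (NoDup (zrange M)).
  { apply FinFun.Injective_map_NoDup; [intros x y e; lia | apply seq_NoDup]. }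
  apply NoDup_list_prod; assumption.
Qed.

Lemma inbox_in_triangle M a b c q : inbox M a -> inbox M b -> inbox M c ->
  (0 < dbl_area a b c)%Z -> in_triangle a b c q -> inbox M q.
Proof.
  intros ha hb hc hD (h1 & h2 & h3).
  pose proof (dbl_area_split q a b c) as hs.
  destruct (dbl_area_barycentric a b c q) as [e1 e2].
  set (D := dbl_area a b c) in *.
  set (k1 := dbl_area q a b) in *. set (k2 := dbl_area q b c) in *.
  set (k3 := dbl_area q c a) in *. clearbody D k1 k2 k3.
  unfold inbox in *. rewrite !Z.abs_le in *. split; split; nia.
Qed.

Lemma sum_Ang_tri_unimodular M a b c : inbox M a -> inbox M b -> inbox M c ->
  dbl_area a b c = 1%Z -> sumR (map (Ang_tri a b c) (box M)) = / 2.
Proof.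
  intros ha hb hc hD.
  assert (hdistinct : a <> b /\ b <> c /\ a <> c).
  { repeat split; intros <-; revert hD; unfold dbl_area, zcross, zsub; cbn [fst snd]; lia. }
  rewrite (sumR_map_support ipt_eq_dec _ _ (a :: b :: c :: nil)).
  - rewrite <- (Ang_tri_vertices a b c) by lia. unfold sumR; simpl. ring.
  - apply NoDup_box.
  - repeat constructor; simpl; intuition.
  - intros q hq. rewrite In_box. simpl in hq. intuition (subst; assumption).
  - intros q _ hq. apply Ang_tri_off_triangle; [lia |].
    intros hin. apply hq. simpl.
    destruct (unimodular_in_triangle a b c q hD hin) as [e | [e | e]]; auto.
Qed.

Lemma sum_Ang_tri_nonneg M D : (0 <= D)%Z ->
  forall a b c, inbox M a -> inbox M b -> inbox M c -> dbl_area a b c = D ->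
  sumR (map (Ang_tri a b c) (box M)) = IZR D / 2.
Proof.
  induction D as [D IH] using (well_founded_induction (Z.lt_wf 0)).
  intros hD0 a b c ha hb hc hD.
  destruct (Z.eq_dec D 0) as [-> | h0].
  { rewrite sumR_map_zero; [lra |]. intros q _. apply Ang_tri_degenerate. exact hD. }
  destruct (Z.eq_dec D 1) as [-> | h1].
  { rewrite sum_Ang_tri_unimodular by assumption. lra. }
  destruct (exists_split_point a b c ltac:(lia)) as (e & he & hab & hbc & hca).
  assert (inbox M e) by (apply (inbox_in_triangle M a b c); [assumption .. | lia | exact he]).
  destruct he as (hab0 & hbc0 & hca0).
  rewrite (sumR_map_ext _ (fun q => Ang_tri e a b q + Ang_tri e b c q + Ang_tri e c a q))
    by (intros; apply Ang_tri_split).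
  rewrite !sumR_map_plus, (IH (dbl_area e a b)), (IH (dbl_area e b c)), (IH (dbl_area e c a));
    try (assumption || reflexivity || lia).
  rewrite <- hD, <- (dbl_area_split e a b c), !plus_IZR. lra.
Qed.

Lemma sum_Ang_tri M a b c : inbox M a -> inbox M b -> inbox M c ->
  sumR (map (Ang_tri a b c) (box M)) = IZR (dbl_area a b c) / 2.
Proof.
  intros ha hb hc.
  destruct (Z_le_gt_dec 0 (dbl_area a b c)) as [hD | hD].
  - apply (sum_Ang_tri_nonneg M); auto.
  - rewrite (sumR_map_ext _ (fun q => - Ang_tri a c b q)) by (intros; rewrite Ang_tri_swap; ring).
    rewrite sumR_map_opp, (sum_Ang_tri_nonneg M (dbl_area a c b)), dbl_area_swap, opp_IZR;
      try (assumption || reflexivity); [lra | rewrite dbl_area_swap; lia].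
Qed.

Lemma Ang_tri_off_box M a b c q : inbox M a -> inbox M b -> inbox M c -> ~ inbox M q ->
  Ang_tri a b c q = 0.
Proof.
  unfold inbox. intros ha hb hc hq.
  destruct (Z_lt_le_dec M (fst q)); [apply (Ang_tri_halfplane _ _ _ _ (-1) 0); lia |].
  destruct (Z_lt_le_dec (fst q) (- M)); [apply (Ang_tri_halfplane _ _ _ _ 1 0); lia |].
  destruct (Z_lt_le_dec M (snd q)); [apply (Ang_tri_halfplane _ _ _ _ 0 (-1)); lia |].
  destruct (Z_lt_le_dec (snd q) (- M)); [apply (Ang_tri_halfplane _ _ _ _ 0 1); lia |].
  exfalso. apply hq. lia.
Qed.

(** * Fan triangulation of a polygon *)

Lemma Ang_shift_fan (p : nat -> ipt) n q : p n = p 0%nat ->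
  Ang_shift p n q = sumR (map (fun i => Ang_tri (p 0%nat) (p (i - 1)%nat) (p i) q) (seq 1 n)).
Proof.
  intros hp.
  set (g := fun j => ang (subq (p 0%nat) q) (subq (p j) q)).
  rewrite (sumR_map_ext _
    (fun i => ang (subq (p (i - 1)%nat) q) (subq (p i) q) + (g (i - 1)%nat - g i))).
  2:{ intros i _. unfold Ang_tri, g. rewrite (ang_antisym (subq (p 0%nat) q)). ring. }
  rewrite sumR_map_plus, sumR_telescope. unfold g. rewrite hp. unfold Ang_shift. ring.
Qed.

Lemma Area_fan (p : nat -> ipt) n : p n = p 0%nat ->
  Area p n = sumR (map (fun i => IZR (dbl_area (p 0%nat) (p (i - 1)%nat) (p i)) / 2) (seq 1 n)).
Proof.
  intros hp.
  set (h := fun j => area (toR (p 0%nat)) (toR (p j))).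
  rewrite (sumR_map_ext _
    (fun i => area (toR (p (i - 1)%nat)) (toR (p i)) + (h (i - 1)%nat - h i))).
  2:{ intros i _. rewrite dbl_area_shoelace. unfold h, area. ring. }
  rewrite sumR_map_plus, sumR_telescope. unfold h. rewrite hp. unfold Area. ring.
Qed.

Lemma polygon_in_box (p : nat -> ipt) n : exists M, forall i, (i <= n)%nat -> inbox M (p i).
Proof.
  unfold inbox. induction n as [| n [M hM]].
  - exists (Z.max (Z.abs (fst (p 0%nat))) (Z.abs (snd (p 0%nat)))).
    intros i hi. replace i with 0%nat by lia. lia.
  - exists (Z.max M (Z.max (Z.abs (fst (p (S n)))) (Z.abs (snd (p (S n)))))).
    intros i hi. destruct (Nat.eq_dec i (S n)) as [-> | hne]; [lia |].
    specialize (hM i ltac:(lia)). lia.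
Qed.

Theorem lemma2p5 (n : nat) (p : nat -> ipt) :
  (1 <= n)%nat -> p n = p 0%nat ->
  exists s : list ipt,
    NoDup s /\
    (forall q : ipt, ~ In q s -> Ang_shift p n q = 0) /\
    Area p n = sumR (map (Ang_shift p n) s).
Proof.
  intros _ hclosed.
  destruct (polygon_in_box p n) as [M hM].
  exists (box M). split; [apply NoDup_box | split].
  - intros q hq. rewrite In_box in hq. rewrite (Ang_shift_fan p n q hclosed).
    apply sumR_map_zero. intros i hi. apply in_seq in hi.
    apply (Ang_tri_off_box M); try apply hM; lia || assumption.
  - rewrite (sumR_map_ext _ _ _ (fun q _ => Ang_shift_fan p n q hclosed)), sumR_swap,
      Area_fan by exact hclosed.
    apply sumR_map_ext. intros i hi. apply in_seq in hi.
    symmetry. apply sum_Ang_tri; apply hM; lia.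
Qed.
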